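(* For odd $N\ge5$ let $G_{N,1}$ be the graph with vertex set $\mathbb Z_N$ in which two distinct vertices $i,j$ are adjacent iff $j-i\not\equiv\pm1\pmod N$, and let $Kf(G_{N,1})=\sum_{\{u,v\}} R(u,v)$ be its Kirchhoff index (sum of effective resistances over unordered pairs of distinct vertices). With $\Delta=\sqrt{N(N-4)}$, \[ Kf(G_{N,1})\sim\frac{N^2}{\Delta}\sim N\qquad (N\to\infty\text{ through odd integers}). \]
   Context: Effective resistance uses unit conductance on every edge; $a_N\sim b_N$ means $a_N/b_N\to1$. *)

From HB Require Import structures.
From mathcomp Require Import all_boot all_order all_algebra.
From mathcomp Require Import all_classical all_reals all_analysis.
Set Implicit Arguments. Unset Strict Implicit. Unset Printing Implicit Defensive.
Import Order.TTheory GRing.Theory Num.Theory.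
Local Open Scope ring_scope.

Definition gadj (N : nat) (i j : 'I_N) : bool :=
  [&& i != j, ((j + N - i) %% N != 1)%N & ((j + N - i) %% N != N.-1)%N].

Definition gdeg (N : nat) (i : 'I_N) : nat := #|[pred j | gadj i j]|.

Definition glap (R : fieldType) (N : nat) : 'M[R]_N :=
  \matrix_(i, j) (if i == j then (gdeg i)%:R else if gadj i j then -1 else 0).

Definition evec (R : fieldType) (N : nat) (u v : 'I_N) : 'rV[R]_N :=
  \row_k ((k == u)%:R - (k == v)%:R).

(* Effective resistance: let x be a potential with x L = e_u - e_v
   (unit current injected at u, extracted at v; obtained from the
   partial inverse pinvmx, which solves the system whenever it is
   solvable, i.e. for connected graphs); R(u,v) = x_u - x_v. *)
Definition effres (R : fieldType) (N : nat) (u v : 'I_N) : R :=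
  let x := evec R u v *m pinvmx (glap R N) in x 0 u - x 0 v.

Definition kirchhoff (R : fieldType) (N : nat) : R :=
  \sum_(u < N) \sum_(v < N | (u < v)%N) effres R u v.

From HB Require Import structures.
From mathcomp Require Import all_boot all_order all_algebra.
From mathcomp Require Import all_classical all_reals all_analysis.
From mathcomp Require Import ring lra zify.
Import Order.TTheory GRing.Theory Num.Theory numFieldNormedType.Exports.
Set Implicit Arguments. Unset Strict Implicit. Unset Printing Implicit Defensive.
Local Open Scope ring_scope.

(* G_{N,1} is the complement of the N-cycle, so its Laplacian L satisfies
   L + J = (N - 2) I + C, where J is the all-ones matrix and C the adjacency
   matrix of the cycle.  Since e_u - e_v is orthogonal to the constants,
   R(u, v) = b (L + J)^-1 b^T with b = e_u - e_v.  As C is nonnegative,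
   symmetric and 2-regular, the spectrum of (N - 2) I + C lies in [N - 4, N],
   so |b|^2 = 2 gives 2 / N <= R(u, v) <= 2 / (N - 4).  Summing over the
   N (N - 1) / 2 pairs, N - 1 <= Kf <= N (N - 1) / (N - 4), hence Kf ~ N, and
   Kf ~ N^2 / Delta because Delta / N = sqrt (1 - 4 / N) tends to 1. *)

Lemma weighted_cauchy_schwarz (R : realDomainType) (T : finType) (w x z : T -> R) :
  (forall i, 0 <= w i) ->
  (\sum_i w i * x i * z i) ^+ 2 <= (\sum_i w i * x i ^+ 2) * (\sum_i w i * z i ^+ 2).
Proof.
move=> w_ge0; set a := \sum_i w i * x i ^+ 2; set b := \sum_i w i * z i ^+ 2.
set c := \sum_i w i * x i * z i.
have : 0 <= \sum_i \sum_j w i * w j * (x i * z j - x j * z i) ^+ 2.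
  by do 2!apply: sumr_ge0 => ? _; rewrite mulr_ge0 ?sqr_ge0 ?mulr_ge0.
suff -> : \sum_i \sum_j w i * w j * (x i * z j - x j * z i) ^+ 2 =
    a * b + b * a - 2 * (c * c) by rewrite (mulrC b) expr2; lra.
rewrite /a /b /c !big_distrlr mulr_sumr -big_split -sumrB; apply: eq_bigr => i _.
rewrite mulr_sumr -big_split -sumrB; apply: eq_bigr => j _ /=; ring.
Qed.

Section RegularShift.
Variables (R : realFieldType) (T : finType) (A : T -> T -> R) (d c : R).
Hypothesis A_ge0 : forall i j, 0 <= A i j.
Hypothesis A_sym : forall i j, A i j = A j i.
Hypothesis A_sum : forall j, \sum_i A i j = d.
Variables y b : T -> R.
Hypothesis b_def : forall j, b j = c * y j + \sum_i y i * A i j.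

(* With M = c I + A and b = y M, the two-sided bounds below say that the
   spectrum of M lies in [c - d, c + d], proved without diagonalization. *)

Let Syy := \sum_i y i ^+ 2.
Let Qyy := \sum_i \sum_j A i j * (y i * y j).
Let yA j := \sum_i y i * A i j.

Let S_ge0 : 0 <= Syy.
Proof. by apply: sumr_ge0 => i _; apply: sqr_ge0. Qed.

Let sum_A_sqr_left : \sum_i \sum_j A i j * y i ^+ 2 = d * Syy.
Proof.
rewrite /Syy mulr_sumr; apply: eq_bigr => i _.
have row_sum : \sum_j A i j = d by rewrite -(A_sum i); apply: eq_bigr => j _; rewrite A_sym.
by rewrite -mulr_suml row_sum.
Qed.

Let sum_A_sqr_right : \sum_i \sum_j A i j * y j ^+ 2 = d * Syy.
Proof.
rewrite exchange_big /Syy mulr_sumr; apply: eq_bigr => j _.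
by rewrite -mulr_suml A_sum mulrC.
Qed.

Lemma quadform_bound : - (d * Syy) <= Qyy <= d * Syy.
Proof.
have expand s : \sum_i \sum_j A i j * (y i + s * y j) ^+ 2 =
    d * Syy + s ^+ 2 * (d * Syy) + 2 * s * Qyy.
  rewrite -{1}sum_A_sqr_left -sum_A_sqr_right /Qyy.
  rewrite !mulr_sumr -!big_split; apply: eq_bigr => i _.
  rewrite !mulr_sumr -!big_split; apply: eq_bigr => j _ /=; ring.
have nonneg s : 0 <= \sum_i \sum_j A i j * (y i + s * y j) ^+ 2.
  by do 2!apply: sumr_ge0 => ? _; rewrite mulr_ge0 ?sqr_ge0.
by have := nonneg 1; have := nonneg (-1); rewrite !expand sqrrN expr1n; lra.
Qed.

Lemma sum_sqr_yA_le : \sum_j yA j ^+ 2 <= d ^+ 2 * Syy.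
Proof.
have yA_sqr_le j : yA j ^+ 2 <= d * \sum_i A i j * y i ^+ 2.
  rewrite [yA j](_ : _ = \sum_i A i j * y i * 1); last first.
    by apply: eq_bigr => i _; rewrite mulr1 mulrC.
  apply: le_trans (@weighted_cauchy_schwarz _ _ (A^~ j) y (fun=> 1) (A_ge0^~ j)) _.
  under [X in _ * X <= _]eq_bigr do rewrite expr1n mulr1.
  by rewrite A_sum mulrC.
rewrite expr2 -mulrA -sum_A_sqr_left exchange_big mulr_sumr.
exact: ler_sum.
Qed.

Let dot_yA : \sum_j y j * yA j = Qyy.
Proof.
rewrite /Qyy exchange_big; apply: eq_bigr => j _.
by rewrite mulr_sumr; apply: eq_bigr => i _; ring.
Qed.

Let dot_shift : \sum_j y j * b j = c * Syy + Qyy.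
Proof.
rewrite -dot_yA /Syy mulr_sumr -big_split; apply: eq_bigr => j _ /=.
by rewrite b_def /yA; ring.
Qed.

Let sum_sqr_shift : \sum_j b j ^+ 2 = c ^+ 2 * Syy + 2 * c * Qyy + \sum_j yA j ^+ 2.
Proof.
rewrite -dot_yA /Syy !mulr_sumr -!big_split; apply: eq_bigr => j _ /=.
by rewrite b_def /yA; ring.
Qed.

Lemma shift_dot_ge : (c - d) * Syy <= \sum_j y j * b j.
Proof. by rewrite dot_shift; case/andP: quadform_bound; lra. Qed.

Lemma shift_norm_le_dot : d <= c -> \sum_j b j ^+ 2 <= (c + d) * \sum_j y j * b j.
Proof.
move=> le_dc; rewrite sum_sqr_shift dot_shift.
have := sum_sqr_yA_le; case/andP: quadform_bound => _ Q_le.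
have := ler_wpM2l (_ : 0 <= c - d) Q_le; rewrite subr_ge0 => /(_ le_dc).
nra.
Qed.

Lemma shift_dot_le_norm : d <= c -> (c - d) * \sum_j y j * b j <= \sum_j b j ^+ 2.
Proof.
move=> le_dc; have := @weighted_cauchy_schwarz _ _ (fun=> 1) y b (fun=> ler01).
under eq_bigr do rewrite mul1r.
under [X in _ <= X * _]eq_bigr do rewrite mul1r.
under [X in _ <= _ * X]eq_bigr do rewrite mul1r.
have := shift_dot_ge; rewrite -/Syy.
set r := \sum_j y j * b j; set B := \sum_j b j ^+ 2 => dot_ge cs.
have B_ge0 : 0 <= B by apply: sumr_ge0 => j _; apply: sqr_ge0.
have cd_ge0 : 0 <= c - d by rewrite subr_ge0.
have [r_le0|r_gt0] := lerP r 0.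
  by apply: le_trans B_ge0; rewrite mulr_ge0_le0.
have := ler_wpM2l cd_ge0 cs; have := ler_wpM2r B_ge0 dot_ge.
rewrite expr2 !mulrA => h2 h1; rewrite -(ler_pM2r r_gt0) (mulrC B); lra.
Qed.

Lemma shift_eq0 : d < c -> (forall j, b j = 0) -> forall i, y i = 0.
Proof.
move=> lt_dc b0 i; have := shift_dot_ge.
rewrite big1 => [|j _]; last by rewrite b0 mulr0.
rewrite pmulr_rle0 ?subr_gt0 // => Syy_le0.
have sqr_le : y i ^+ 2 <= Syy.
  by rewrite /Syy (bigD1 i) //= lerDl; apply: sumr_ge0 => j _; apply: sqr_ge0.
by apply/eqP; rewrite -sqrf_eq0 eq_le sqr_ge0 andbT (le_trans sqr_le).
Qed.
End RegularShift.

Definition cycle_adj N (i j : 'I_N) : bool := (j == ordS i) || (j == ord_pred i).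

Lemma cycle_adj_sym N (i j : 'I_N) : cycle_adj i j = cycle_adj j i.
Proof.
have succ_pred k l : (l == @ordS N k) = (k == ord_pred l).
  by apply/eqP/eqP => [->|->]; rewrite ?ordSK ?ord_predK.
by rewrite /cycle_adj !succ_pred orbC.
Qed.

Lemma ord_sub_mod N (i j : 'I_N) :
  ((j + N - i) %% N = if (i <= j)%N then j - i else j + N - i)%N.
Proof.
have := ltn_ord i; have := ltn_ord j; case: (leqP i j) => le_ij ? ?.
  by rewrite -addnBAC // modnDr modn_small //; lia.
by rewrite modn_small //; lia.
Qed.

Lemma ord_succ_mod N (i : 'I_N) : (i.+1 %% N = if i.+1 < N then i.+1 else 0)%N.
Proof.
have := ltn_ord i; case: (ltnP i.+1 N) => [/modn_small //|? ?].
by rewrite (_ : i.+1 = N) ?modnn //; lia.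
Qed.

Lemma ord_pred_mod N (i : 'I_N) : ((i + N).-1 %% N = if 0 < i then i.-1 else N.-1)%N.
Proof.
have := ltn_ord i; case: (posnP i) => [i0|i_gt0] ?.
  by rewrite i0 add0n modn_small //; lia.
by rewrite (_ : (i + N).-1 = i.-1 + N)%N ?modnDr ?modn_small //; lia.
Qed.

Lemma gadjE N (i j : 'I_N) : gadj i j = (i != j) && ~~ cycle_adj i j.
Proof.
rewrite /gadj /cycle_adj negb_or -!val_eqE /= ord_sub_mod ord_succ_mod ord_pred_mod.
have := ltn_ord i; have := ltn_ord j.
by do 3!case: ifP; move=> *; apply/idP/idP; lia.
Qed.

Lemma ord_neighbours_uniq N (i : 'I_N) : (2 < N)%N ->
  [&& ordS i != i, ord_pred i != i & ordS i != ord_pred i].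
Proof.
rewrite -!val_eqE /= ord_succ_mod ord_pred_mod; have := ltn_ord i.
by do 2!case: ifP; lia.
Qed.

Lemma gdegE N (i : 'I_N) : (2 < N)%N -> gdeg i = (N - 3)%N.
Proof.
move=> N_gt2; set nbhd := [:: i; ordS i; ord_pred i].
have nbhd_uniq : uniq nbhd.
  have /and3P[] := ord_neighbours_uniq i N_gt2.
  by rewrite /= !inE !negb_or !(eq_sym i) => -> -> ->.
have -> : gdeg i = #|[predC nbhd]|.
  by apply: eq_card => j; rewrite !inE gadjE /cycle_adj [RHS]negb_or eq_sym.
by rewrite -[in RHS](card_ord N) -(cardC (mem nbhd)) (card_uniqP nbhd_uniq) addKn.
Qed.

Lemma cycle_adj_irrefl N (i : 'I_N) : (2 < N)%N -> cycle_adj i i = false.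
Proof.
move=> N_gt2; have /and3P[Si_neq Pi_neq _] := ord_neighbours_uniq i N_gt2.
by rewrite /cycle_adj !(eq_sym i) (negbTE Si_neq) (negbTE Pi_neq).
Qed.

Definition cycmx (R : ringType) N : 'M[R]_N := \matrix_(i, j) (cycle_adj i j)%:R.

Lemma sum_cycmx_col (R : ringType) N (j : 'I_N) : (2 < N)%N -> \sum_i cycmx R N i j = 2.
Proof.
move=> N_gt2; have /and3P[_ _ SP_neq] := ord_neighbours_uniq j N_gt2.
have adjE i : cycle_adj i j = (i == ordS j) || (i == ord_pred j) by rewrite cycle_adj_sym.
rewrite (bigD1 (ordS j)) // (bigD1 (ord_pred j)) /=; last by rewrite eq_sym.
rewrite big1 => [|i /andP[not_S not_P]]; last first.
  by rewrite mxE adjE (negbTE not_S) (negbTE not_P).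
by rewrite !mxE !adjE !eqxx orbT addr0.
Qed.

Lemma glap_add_const (R : fieldType) N : (2 < N)%N ->
  glap R N + const_mx 1 = (N%:R - 2)%:M + cycmx R N.
Proof.
move=> N_gt2; apply/matrixP => i j; rewrite !mxE gadjE.
case: (eqVneq i j) => [<-|ij] /=.
  by rewrite gdegE // cycle_adj_irrefl // natrB // mulr1n /= mulr0n addr0; ring.
by case: (cycle_adj i j) => /=; rewrite mulr0n ?add0r ?addr0 ?addNr.
Qed.

Lemma gadj_sym N (i j : 'I_N) : gadj i j = gadj j i.
Proof. by rewrite !gadjE eq_sym cycle_adj_sym. Qed.

Lemma trmx_glap (R : fieldType) N : (glap R N)^T = glap R N.
Proof. by apply/matrixP => i j; rewrite !mxE gadj_sym; case: eqVneq => // ->. Qed.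

Lemma glap_mul_const1 (R : fieldType) N : glap R N *m const_mx 1 = 0 :> 'cV_N.
Proof.
apply/colP => i; rewrite !mxE (bigD1 i) //= !mxE eqxx mulr1.
rewrite (eq_bigr (fun j => - (gadj i j)%:R)) => [|j ji]; last first.
  by rewrite !mxE eq_sym (negbTE ji) mulr1; case: (gadj i j); rewrite ?oppr0.
rewrite sumrN; apply/eqP; rewrite subr_eq0 /gdeg -sum1_card natr_sum !big_mkcond /=.
apply/eqP; rewrite [RHS]big_mkcond; apply: eq_bigr => j _ /=.
by rewrite inE; case: eqVneq => [->|_]; rewrite /gadj ?eqxx //; case: (_ && _).
Qed.

Lemma mulmx_const1 (R : pzRingType) m n p :
  (const_mx 1 : 'M[R]_(m, n)) *m (const_mx 1 : 'M[R]_(n, p)) = n%:R *: const_mx 1.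
Proof.
apply/matrixP => i k; rewrite !mxE mulr1 (eq_bigr (fun=> 1)) => [|j _].
  by rewrite sumr_const card_ord.
by rewrite !mxE mulr1.
Qed.

Lemma pinvmx_form_shift (R : numFieldType) n (L : 'M[R]_n) (b : 'rV[R]_n) :
  L^T = L -> L *m const_mx 1 = 0 :> 'cV_n -> L + const_mx 1 \in unitmx ->
  b *m const_mx 1 = 0 :> 'cV_1 ->
  b *m pinvmx L *m b^T = b *m invmx (L + const_mx 1) *m b^T.
Proof.
(* z := b (L + J)^-1 solves z L = b as z is orthogonal to the constants, and
   any solution w of w L = b has w b^T = w L z^T = b z^T since L is symmetric. *)
case: n => [|n] in L b *; first by rewrite [b]thinmx0 !mul0mx.
move=> L_sym L_one M_unit b_one; set M := L + const_mx 1.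
set z := b *m invmx M; have zM : z *m M = b by rewrite mulmxKV.
have J_factor : const_mx 1 = (const_mx 1 : 'cV[R]_(n.+1)) *m (const_mx 1 : 'rV[R]_(n.+1)).
  by rewrite mulmx_const1 scale1r.
have z_one : z *m (const_mx 1 : 'cV_(n.+1)) = 0.
  have : n.+1%:R *: (z *m const_mx 1) = 0 :> 'cV_1.
    by rewrite scalemxAr -mulmx_const1 -[_ *m const_mx 1]add0r -L_one -mulmxDl mulmxA zM.
  by move/eqP; rewrite scalemx_eq0 pnatr_eq0 => /eqP.
have zL : z *m L = b.
  by rewrite -zM mulmxDr J_factor mulmxA z_one mul0mx addr0.
have dot_b w : w *m L = b -> w *m b^T = b *m z^T.
  by move=> wL; rewrite -{1}zL trmx_mul L_sym mulmxA wL.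
by rewrite !dot_b // mulmxKpV // -zL submxMl.
Qed.

Lemma evecE (R : fieldType) N (u v : 'I_N) : evec R u v = 'e_u - 'e_v.
Proof. by apply/rowP => k; rewrite !mxE !eqxx. Qed.

Lemma effres_form (R : fieldType) N (u v : 'I_N) :
  effres R u v = (evec R u v *m pinvmx (glap R N) *m (evec R u v)^T) 0 0.
Proof.
rewrite /effres /=; set x := _ *m pinvmx _.
by rewrite evecE linearB /= !trmx_delta mulmxBr -!colE !mxE.
Qed.

Lemma evec_one (R : fieldType) N (u v : 'I_N) : evec R u v *m const_mx 1 = 0 :> 'cV_1.
Proof. by rewrite evecE mulmxBl -!rowE !row_const subrr. Qed.

Lemma evec_norm (R : fieldType) N (u v : 'I_N) : u != v ->
  \sum_j evec R u v 0 j ^+ 2 = 2.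
Proof.
move=> uv; rewrite (bigD1 u) // (bigD1 v) 1?eq_sym //= big1 => [|k /andP[ku kv]].
  by rewrite !mxE !eqxx (negbTE uv) eq_sym (negbTE uv) /= subr0 sub0r sqrrN expr1n addr0.
by rewrite mxE (negbTE ku) (negbTE kv) subr0 expr0n.
Qed.

Section CycleComplement.
Variables (R : realFieldType) (N : nat).
Hypothesis N_gt4 : (4 < N)%N.

Let N_gt2 : (2 < N)%N. Proof. by apply: leq_trans N_gt4. Qed.
Let C := cycmx R N.
Let c : R := N%:R - 2.

Let C_ge0 i j : 0 <= C i j. Proof. by rewrite mxE ler0n. Qed.
Let C_sym i j : C i j = C j i. Proof. by rewrite !mxE cycle_adj_sym. Qed.
Let C_sum j : \sum_i C i j = 2. Proof. exact: sum_cycmx_col. Qed.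
Let c_gt2 : 2 < c. Proof. by rewrite /c ltrBrDr -natrD ltr_nat. Qed.

Let mulmx_shift (y : 'rV_N) j : (y *m (c%:M + C)) 0 j = c * y 0 j + \sum_i y 0 i * C i j.
Proof. by rewrite mulmxDr mul_mx_scalar !mxE. Qed.

Lemma glap_add_const_unit : glap R N + const_mx 1 \in unitmx.
Proof.
rewrite glap_add_const // -row_free_unit; apply: inj_row_free => y yM0.
apply/rowP => i; rewrite mxE; apply: (shift_eq0 C_ge0 C_sym C_sum (mulmx_shift y) c_gt2).
by move=> j; rewrite yM0 mxE.
Qed.

Lemma effres_bounds (u v : 'I_N) : u != v ->
  2 <= N%:R * effres R u v /\ (N%:R - 4) * effres R u v <= 2.
Proof.
move=> uv; rewrite effres_form pinvmx_form_shift ?trmx_glap ?glap_mul_const1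
  ?glap_add_const_unit ?evec_one //.
set b := evec R u v; set y := b *m invmx _.
have b_def j : b 0 j = c * y 0 j + \sum_i y 0 i * C i j.
  by rewrite -mulmx_shift -glap_add_const // mulmxKV // glap_add_const_unit.
have -> : (y *m b^T) 0 0 = \sum_j y 0 j * b 0 j.
  by rewrite [LHS]mxE; apply: eq_bigr => j _; rewrite [b^T j 0]mxE.
have [-> ->] : N%:R - 4 = c - 2 /\ N%:R = c + 2 by rewrite /c; split; ring.
rewrite -[X in X <= _ /\ _ <= X](evec_norm R uv) -/b.
have c_ge2 := ltW c_gt2.
by split; [exact: (shift_norm_le_dot C_ge0 C_sym C_sum b_def) |
           exact: (shift_dot_le_norm C_ge0 C_sym C_sum b_def)].
Qed.
End CycleComplement.

Lemma bin2_double n : ('C(n, 2) * 2 = n * n.-1)%N.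
Proof. by rewrite bin2 muln2 halfK oddM; case: n => //= n; rewrite andNb subn0. Qed.

Lemma sum_ltn_pairs_const (R : nmodType) N (x : R) :
  \sum_(u < N) \sum_(v < N | (u < v)%N) x = x *+ 'C(N, 2).
Proof.
elim: N => [|N IH]; first by rewrite big_ord0.
rewrite big_ord_recr /= [X in _ + X]big1 ?addr0 => [|v]; last by rewrite ltnNge -ltnS ltn_ord.
under eq_bigr => u _ do rewrite big_mkcond big_ord_recr /= ltn_ord -big_mkcond.
by rewrite big_split /= IH sumr_const card_ord -mulrnDr binS bin1.
Qed.

Lemma kirchhoff_bounds (R : realFieldType) N : (4 < N)%N ->
  N%:R - 1 <= kirchhoff R N /\ (N%:R - 4) * kirchhoff R N <= N%:R * (N%:R - 1).
Proof.
move=> N_gt4; have N_gt0 : 0 < N%:R :> R by rewrite ltr0n; lia.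
have pairs : 'C(N, 2)%:R * 2 = N%:R * (N%:R - 1) :> R.
  by rewrite -natrM bin2_double natrM -subn1 natrB //; lia.
split.
  have -> : N%:R - 1 = \sum_(u < N) \sum_(v < N | (u < v)%N) (2 / N%:R) :> R.
    rewrite sum_ltn_pairs_const -(mulr_natr (2 / N%:R)) mulrAC (mulrC 2) pairs.
    by rewrite mulrAC divff ?mul1r // gt_eqF.
  apply: ler_sum => u _; apply: ler_sum => v uv.
  have [+ _] := effres_bounds R N_gt4 (negbT (ltn_eqF uv)).
  by rewrite ler_pdivrMr // mulrC.
rewrite -pairs (mulrC _ 2) mulr_natr -sum_ltn_pairs_const /kirchhoff mulr_sumr.
apply: ler_sum => u _; rewrite mulr_sumr; apply: ler_sum => v uv.
by have [_] := effres_bounds R N_gt4 (negbT (ltn_eqF uv)).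
Qed.

Lemma kirchhoff_ratio_bounds (R : realFieldType) (n K : R) : 4 < n ->
  n - 1 <= K -> (n - 4) * K <= n * (n - 1) ->
  1 - 3 / (n - 4) <= K / n <= 1 + 3 / (n - 4).
Proof.
move=> n_gt4 K_ge K_le; have n_gt0 : 0 < n by lra.
have m_gt0 : 0 < n - 4 by lra.
have -> : 1 - 3 / (n - 4) = (n - 7) / (n - 4) by field; rewrite subr_eq0 gt_eqF.
have -> : 1 + 3 / (n - 4) = (n - 1) / (n - 4) by field; rewrite subr_eq0 gt_eqF.
apply/andP; split; rewrite ler_pdivrMr // mulrAC ler_pdivlMr //.
  by have := ler_wpM2r (ltW m_gt0) K_ge; lra.
by rewrite mulrC; lra.
Qed.

Lemma sqrt_ratio_bounds (R : rcfType) (n : R) : 4 < n ->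
  1 - 4 / (n - 4) <= Num.sqrt (n * (n - 4)) / n <= 1 + 4 / (n - 4).
Proof.
move=> n_gt4; have n_gt0 : 0 < n by lra.
have m_gt0 : 0 < n - 4 by lra.
set s := Num.sqrt _; have s_ge0 : 0 <= s := sqrtr_ge0 _.
have s_sqr : s ^+ 2 = n * (n - 4) by rewrite sqr_sqrtr // mulr_ge0 // ltW.
have s_ge : n - 4 <= s by nra.
have s_le : s <= n by nra.
have -> : 1 - 4 / (n - 4) = (n - 8) / (n - 4) by field; rewrite subr_eq0 gt_eqF.
have -> : 1 + 4 / (n - 4) = n / (n - 4) by field; rewrite subr_eq0 gt_eqF.
apply/andP; split; rewrite ler_pdivrMr // mulrAC ler_pdivlMr //.
  by have := ler_wpM2r (ltW m_gt0) s_ge; nra.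
by have := ler_wpM2r (ltW m_gt0) s_le; nra.
Qed.

Lemma near_one_weaken (R : realFieldType) (x C C' e e' : R) :
  0 < e' <= e -> 0 <= C <= C' -> 1 - C / e <= x <= 1 + C / e ->
  1 - C' / e' <= x <= 1 + C' / e'.
Proof.
move=> /andP[e'_gt0 le_e'e] /andP[C_ge0 le_CC'].
have : C / e <= C' / e'.
  by apply: ler_pM => //; rewrite ?invr_ge0 ?lef_pV2 ?posrE //; lra.
by move=> le_ratio /andP[lo hi]; apply/andP; split; lra.
Qed.

Local Open Scope classical_set_scope.

Lemma cvg_one_squeeze (R : realType) (f : nat -> R) (C : R) :
  (forall k, 1 - C / k.+1%:R <= f k <= 1 + C / k.+1%:R) -> f @ \oo --> (1 : R).
Proof.
move=> f_bound; have C_harm : (fun k => C / k.+1%:R) @ \oo --> (0 : R).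
  by rewrite -(mulr0 C); apply: cvgMr; exact: cvg_harmonic.
apply: (@squeeze_cvgr _ _ _ _ (fun k => 1 - C / k.+1%:R) (fun k => 1 + C / k.+1%:R)).
- exact: nearW.
- by rewrite -[X in _ --> X]subr0; apply: cvgB => //; exact: cvg_cst.
- by rewrite -[X in _ --> X]addr0; apply: cvgD => //; exact: cvg_cst.
Qed.

Theorem mainTheorem12 (R : realType) :
  (fun k : nat =>
     kirchhoff R (2 * k + 5)%N /
       (((2 * k + 5)%N%:R) ^+ 2 /
          Num.sqrt ((2 * k + 5)%N%:R * ((2 * k + 5)%N%:R - 4))))
    @ \oo --> (1 : R)
  /\
  (fun k : nat => kirchhoff R (2 * k + 5)%N / (2 * k + 5)%N%:R)
    @ \oo --> (1 : R).
Proof.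
pose N k := (2 * k + 5)%N; pose n k : R := (N k)%:R.
have N_gt4 k : (4 < N k)%N by rewrite /N; lia.
have n_gt4 k : 4 < n k by rewrite /n ltr_nat.
have harmonic_le k : (0 : R) < k.+1%:R <= n k - 4.
  by rewrite ltr0n /= lerBrDr -natrD ler_nat /N; lia.
have ratio_cvg : (fun k => kirchhoff R (N k) / n k) @ \oo --> (1 : R).
  apply: (@cvg_one_squeeze _ _ 4) => k; have [lo hi] := kirchhoff_bounds R (N_gt4 k).
  apply: near_one_weaken (harmonic_le k) _ (kirchhoff_ratio_bounds (n_gt4 k) lo hi).
  by rewrite ler0n ler_nat.
have sqrt_cvg : (fun k => Num.sqrt (n k * (n k - 4)) / n k) @ \oo --> (1 : R).
  apply: (@cvg_one_squeeze _ _ 4) => k.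
  by apply: near_one_weaken (harmonic_le k) _ (sqrt_ratio_bounds (n_gt4 k)); rewrite ler0n lexx.
split; last exact: ratio_cvg.
rewrite (_ : (fun k => _) = (fun k => kirchhoff R (N k) / n k * (Num.sqrt (n k * (n k - 4)) / n k))).
  by rewrite -[X in _ --> X](mulr1 1); apply: cvgM.
apply/funext => k; rewrite /n /N invf_div; field.
by have := ler0n R k; rewrite gt_eqF //; lra.
Qed.
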